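(* Let $(\Gamma,x)\subset\Sigma$, $\lambda$, $\mathit{KW}=\mathit{KW}(\Gamma,x)$ (trivial cochain), $a_e,\beta_e,R$, and the map $S$ be as in the context. Fix $F\in\mathbb C^\diamondsuit$ and a vertex $v$ of $\Gamma$. Then $f=S(F)$ satisfies $(\mathit{KW}f)(\bar e)=0$ for all $e\in\mathbb E_v$ if and only if, for all $e\in\mathbb E_v$, writing $e'=R(e)$, \[ \Pr\left(F(z_e);\,i\exp\left(-\tfrac i2(a_e+\theta_e)\right)\right)=\Pr\left(F(z_{e'});\,i\exp\left(-\tfrac i2(a_{e'}-\theta_{e'})\right)\right)\exp\left(\tfrac i2(\beta_e-\theta_e-\theta_{e'})\right). \]
   Context: Let $\Sigma$ be a closed connected oriented surface with a Riemannian metric, $\Gamma\subset\Sigma$ a finite connected graph with smoothly embedded edges whose faces are discs, with edge weights $x_e=\tan(\theta_e/2)\in[0,1]$, $\theta_e\in[0,\pi/2]$. $\mathbb E$ is the set of oriented edges (origin $o(e)$, terminus $t(e)$, reversal $\bar e$); $z_e=z_{\bar e}$ is the midpoint of the edge, $\diamondsuit=\{z_e\}$ the set of midpoints, $x_e=x_{\bar e}$, $\theta_e=\theta_{\bar e}$; $\mathbb E_v$ is the set of oriented edges with origin $v$. Fix a vector field $\lambda$ with isolated zeros of even index in $\Sigma\setminus\Gamma$. For $o(e')=t(e)$, $e'\neq\bar e$, $\alpha_\lambda(e,e')$ is the rotation angle relative to $\lambda$ of the velocity along $e$ from $z_e$ to $t(e)$ then $e'$ from $o(e')$ to $z_{e'}$.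 $(\mathit{KW}f)(e)=f(e)-x_e\sum_{e'\in\mathbb E_{t(e)},e'\ne\bar e}\exp(\tfrac i2\alpha_\lambda(e,e'))f(e')$ on $\mathbb C^{\mathbb E}$. $a_e$ is the oriented angle at $z_e$ from $\lambda(z_e)$ to the direction of $e$; for $e\in\mathbb E_v$, $R(e)$ is the next element of $\mathbb E_v$ counterclockwise, and $\beta_e=\pi+\alpha_\lambda(\bar e,R(e))$. For $u\in\mathbb C^*$, $\Pr(\cdot\,;u)$ is the orthogonal projection of $\mathbb C$ onto the real line $u\mathbb R$. Let $\ell(e)=\exp(-\tfrac i2a_e)\mathbb R$ and define the $\mathbb R$-linear map $S\colon\mathbb C^\diamondsuit\to\mathbb C^{\mathbb E}$, $(SF)(e)=\sin(\theta_e/2)\Pr(F(z_e);\ell(e))$. *)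

From mathcomp Require Import all_boot all_order all_algebra.
From mathcomp Require Import complex.
From mathcomp Require Import reals trigo.
Set Implicit Arguments. Unset Strict Implicit. Unset Printing Implicit Defensive.
Import GRing.Theory Num.Theory.
Local Open Scope ring_scope.
Local Open Scope complex_scope.

(* Local model of the configuration around the vertex v.
   The index type I stands for E_v (oriented edges with origin v), D for the
   set of midpoints, z : I -> D maps e to z_e.  Angles are measured w.r.t. the
   (nonvanishing near v) vector field lambda:
     phi e : oriented angle at v from lambda(v) to the tangent of e at v;
     w e   : rotation angle (rel. lambda) of the velocity along e from v to z_e. *)

Section Defs.
Variable R : realType.

Definition congr2pi (x y : R) : Prop := exists k : int, x = y + k%:~R * (2 * pi).

Definition cis (t : R) : R[i] := cos t +i* sin t.

Definition Pr (z u : R[i]) : R[i] :=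
  (complex.Re (z * u^*) / complex.Re (u * u^*))%:C * u.

Definition ccw_gap (I : Type) (phi : I -> R) (e e' : I) (t : R) : Prop :=
  0 < t < 2 * pi /\ congr2pi (phi e') (phi e + t).

Definition is_ccw_next (I : eqType) (phi : I -> R) (e e' : I) : Prop :=
  e' != e /\
  exists t, ccw_gap phi e e' t /\
    forall e'' t'', e'' != e -> ccw_gap phi e e'' t'' -> t <= t''.

(* r = alpha_lambda(ebar, e') for e, e' in E_v, e' <> e: rotation along ebar
   from z_e to v (which is - w e), plus the turning angle at the corner v
   (the representative in (-pi, pi) of the angle from the incoming direction
   phi e + pi to the outgoing direction phi e'), plus the rotation along e'
   from v to z_e' (which is w e'). *)
Definition is_rot_angle (I : Type) (phi w : I -> R) (e e' : I) (r : R) : Prop :=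
  exists tau, - pi < tau < pi /\ congr2pi tau (phi e' - (phi e + pi)) /\
    r = - w e + tau + w e'.

(* f = S(F): f(e) = sin(theta_e/2) Pr(F(z_e); exp(-i a_e/2) R); for the
   reversed edge ebar, a_ebar = a_e + pi. *)
Definition Sf (I D : Type) (z : I -> D) (a theta : I -> R) (F : D -> R[i])
  (e : I) : R[i] :=
  (sin (theta e / 2))%:C * Pr (F (z e)) (cis (- (a e / 2))).

Definition Sf_bar (I D : Type) (z : I -> D) (a theta : I -> R) (F : D -> R[i])
  (e : I) : R[i] :=
  (sin (theta e / 2))%:C * Pr (F (z e)) (cis (- ((a e + pi) / 2))).

(* (KW f)(ebar) for e in E_v, where f = S(F) and x_e = tan(theta_e/2). *)
Definition KW_bar (I D : finType) (z : I -> D) (a theta : I -> R)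
  (alpha : I -> I -> R) (F : D -> R[i]) (e : I) : R[i] :=
  Sf_bar z a theta F e -
  (tan (theta e / 2))%:C *
    \sum_(e' in I | e' != e) cis (alpha e e' / 2) * Sf z a theta F e'.

End Defs.

(* Write f = S(F) and let u_e be a half-angle with cis u_e = +-exp(-i a_e/2).  Every
   term of (KW f)(ebar) is a real multiple of cis (u_e - pi/2): the phase of the term
   indexed by x is exp(i alpha(ebar, x)/2) cis u_x = +-cis (u_e - pi/2), with sign +1
   exactly when x comes after e in the linear order of the directions reduced to
   [0, 2pi).  In the coordinates P+_e, P-_e of F(z_e) along i exp(-i(a_e +- theta_e)/2),
   (KW f)(ebar) = 0 says that C_e := P+_e + P-_e + sum_(x != e) +-(P+_x - P-_x)
   vanishes, while the relation at e says P+_e = +-P-_(R e).  The identity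
   C_e -+ C_(R e) = 2 (P+_e -+ P-_(R e)) gives one implication; for the other, C is
   invariant along R except for one sign change at the last direction, and R runs
   through all directions, so C = -C = 0. *)

From mathcomp Require Import all_boot all_order all_algebra.
From mathcomp Require Import complex.
From mathcomp Require Import reals trigo.
From mathcomp Require Import lra ring zify.
Import Order.TTheory GRing.Theory Num.Theory.
Local Open Scope ring_scope.
Local Open Scope complex_scope.

Section CisProjection.
Context {R : realType}.
Implicit Types (x y t : R) (z u : R[i]).

Lemma cisD x y : cis (x + y) = cis x * cis y.
Proof. by rewrite /cis sinD cosD; congr (_ +i* _); ring. Qed.

Lemma cis_neq0 t : cis t != 0.
Proof.
apply/eqP => /(congr1 (fun u : R[i] => complex.Re u ^+ 2 + complex.Im u ^+ 2)).
by rewrite /= cos2Dsin2 expr0n /= addr0 => /eqP; rewrite oner_eq0.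
Qed.

Lemma cisDpi y : cis (y + pi) = - cis y.
Proof.
have cis_pi : cis pi = -1 :> R[i] by rewrite /cis cospi sinpi -[RHS]/(- 1 +i* - 0) oppr0.
by rewrite cisD cis_pi mulrN1.
Qed.

Lemma cisDpihalf y : cis (y + pi / 2) = 'i * cis y.
Proof. by rewrite /cis cosDpihalf sinDpihalf; congr (_ +i* _) => /=; ring. Qed.

Lemma cisD_natpi y n : cis (y + n%:R * pi) = cis y \/ cis (y + n%:R * pi) = - cis y.
Proof.
elim: n => [|n IH]; first by left; rewrite mul0r addr0.
rewrite -natr1 mulrDl mul1r addrA cisDpi.
by case: IH => ->; [right | left; rewrite opprK].
Qed.

Lemma cisD_intpi y (k : int) :
  cis (y + k%:~R * pi) = cis y \/ cis (y + k%:~R * pi) = - cis y.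
Proof.
case: k => n; first exact: cisD_natpi.
rewrite NegzE mulrNz mulNr.
have := cisD_natpi (y - n.+1%:R * pi) n.+1; rewrite subrK.
by case=> ->; [left | right; rewrite opprK].
Qed.

Lemma Pr_oppr z u : Pr z (- u) = Pr z u.
Proof.
case: z => z1 z2; case: u => u1 u2; rewrite /Pr /=.
have -> : z1 * - u1 - z2 * - - u2 = - (z1 * u1 - z2 * - u2) by ring.
have -> : - u1 * - u1 - - u2 * - - u2 = u1 * u1 - u2 * - u2 by ring.
by rewrite mulNr rmorphN mulNr mulrN opprK.
Qed.

Lemma Pr_cisD_intpi z u y (k : int) : Pr z (u * cis (y + k%:~R * pi)) = Pr z (u * cis y).
Proof. by case: (cisD_intpi y k) => ->; rewrite ?mulrN ?Pr_oppr. Qed.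

Definition cis_coord z t := complex.Re z * cos t + complex.Im z * sin t.

Lemma Pr_cis z t : Pr z (cis t) = (cis_coord z t)%:C * cis t.
Proof.
case: z => z1 z2; rewrite /Pr /cis_coord /cis /=.
have -> : cos t * cos t - sin t * - sin t = 1 by rewrite -(cos2Dsin2 t); ring.
by rewrite divr1; congr (_%:C * _); ring.
Qed.

Lemma realC_mul_cis_eq0 (c t : R) : (c%:C * cis t == 0) = (c == 0).
Proof. by rewrite mulf_eq0 (negbTE (cis_neq0 t)) orbF fmorph_eq0. Qed.

End CisProjection.

Section CyclicSum.
Context {R : realDomainType} {I : finType}.
Variables (L : I -> R) (next : I -> I).
Hypothesis L_inj : injective L.
Hypothesis next_neq : forall e, next e != e.

Definition orient (e x : I) : R := if L e < L x then 1 else -1.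

(* next e lies strictly between e and x in the cyclic order induced by L. *)
Hypothesis orient_next :
  forall e x, x != e -> x != next e -> orient e x = orient e (next e) * orient (next e) x.

Lemma L_neq e x : e != x -> L e != L x.
Proof. by apply: contra => /eqP /L_inj ->. Qed.

Lemma orientN e x : e != x -> orient x e = - orient e x.
Proof.
move=> /L_neq; rewrite /orient neq_lt => /orP [] h.
  by rewrite h ltNge (ltW h).
by rewrite h ltNge (ltW h) opprK.
Qed.

Lemma orient_sqr e x : orient e x * orient e x = 1.
Proof. by rewrite /orient; case: ifP => _; rewrite ?mulr1 ?mulrNN ?mulr1. Qed.

Variables X Y : I -> R.

Definition cyclic_sum e := X e + Y e + \sum_(x | x != e) orient e x * (X x - Y x).

Lemma cyclic_sum_next e :
  cyclic_sum e - orient e (next e) * cyclic_sum (next e) =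
  2 * (X e - orient e (next e) * Y (next e)).
Proof.
set r := next e; set s := orient e r.
have re : r != e := next_neq e.
have split_sum x0 x1 : x1 != x0 ->
    \sum_(x | x != x0) orient x0 x * (X x - Y x) = orient x0 x1 * (X x1 - Y x1) +
      \sum_(x | (x != x0) && (x != x1)) orient x0 x * (X x - Y x).
  by move=> ne; rewrite (bigD1 x1).
have common : \sum_(x | (x != e) && (x != r)) orient e x * (X x - Y x) =
    s * \sum_(x | (x != r) && (x != e)) orient r x * (X x - Y x).
  rewrite mulr_sumr (eq_bigl (fun x => (x != r) && (x != e))) => [|x].
    by apply: eq_bigr => x /andP [xr xe]; rewrite (orient_next e x xe xr) mulrA.
  by rewrite andbC.
have er : e != r by rewrite eq_sym.
have s2 := orient_sqr e r.
rewrite /cyclic_sum (split_sum e r re) (split_sum r e er) common (orientN e r er) -/s.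
apply/eqP; rewrite -subr_eq0; apply/eqP.
by transitivity ((s * s - 1) * (X e - Y e)); [ring | rewrite s2 subrr mul0r].
Qed.

Lemma next_increasing m e : (forall x, L x <= L m) -> e != m -> L e < L (next e).
Proof.
move=> L_max em; have Lem : L e < L m by rewrite lt_neqAle L_neq ?L_max.
have [->//|rm] := eqVneq (next e) m.
have Lrm : L (next e) < L m by rewrite lt_neqAle L_neq ?L_max.
have := orient_next e m; rewrite eq_sym em eq_sym rm => /(_ isT isT).
rewrite /orient Lem Lrm mulr1; case: ifP => // _; lra.
Qed.

Lemma cyclic_sum_eq0 :
  (forall e, cyclic_sum e = 0) <-> (forall e, X e = orient e (next e) * Y (next e)).
Proof.
split=> [H e | H e0].
  by have := cyclic_sum_next e; rewrite !H; lra.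
(* Along next the cyclic sum keeps its value except at the top element m, where it
   changes sign; climbing from any e up to m gives cyclic_sum e = cyclic_sum m, and
   cyclic_sum m = - cyclic_sum (next m) = - cyclic_sum m. *)
have step e : cyclic_sum e = orient e (next e) * cyclic_sum (next e).
  by apply/eqP; rewrite -subr_eq0 cyclic_sum_next H subrr mulr0.
have [m _ L_max] := arg_maxP L (isT : predT e0).
have {}L_max x : L x <= L m by exact: L_max.
pose above x := #|[pred y | L x < L y]|.
have climb n e : (above e < n)%N -> cyclic_sum e = cyclic_sum m.
  elim: n e => [//|n IH] e; have [->//|em] := eqVneq e m.
  have up := next_increasing m e L_max em.
  rewrite ltnS step /orient up mul1r => le_n; apply: IH; apply: leq_trans le_n.
  apply: proper_card; apply/properP; split.
    by apply/subsetP => y; rewrite !inE; apply: lt_trans.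
  by exists (next e); rewrite !inE ?ltxx.
have down : L (next m) < L m by rewrite lt_neqAle L_neq ?L_max // next_neq.
have := step m; rewrite (climb _ (next m) (ltnSn _)) /orient ltNge (ltW down) /=.
by rewrite (climb _ e0 (ltnSn _)); lra.
Qed.

End CyclicSum.

Arguments cyclic_sum_eq0 {R I L next}.

Lemma congr2pi_eq (R : realType) (x y : R) :
  congr2pi x y -> - (2 * pi) < x - y < 2 * pi -> x = y.
Proof.
move=> [k ->] /andP [lo hi]; have pi_gt0 := @pi_gt0 R.
have k_lt1 : k%:~R < 1 :> R by rewrite -subr_lt0 -(pmulr_llt0 _ pi_gt0); lra.
have Nk_lt1 : (- k)%:~R < 1 :> R by rewrite -subr_lt0 -(pmulr_llt0 _ pi_gt0) mulrNz; lra.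
rewrite ltrz1 in k_lt1; rewrite ltrz1 in Nk_lt1.
have -> : k = 0 by lia.
by rewrite mul0r addr0.
Qed.

Section Directions.
Context {R : realType} {I : finType}.
Variable phi : I -> R.
Hypothesis phi_inj : forall e e' : I, e != e' -> ~ congr2pi (phi e) (phi e').

Let fl e := Num.floor (phi e / (2 * pi)).
Definition dir e := phi e - (fl e)%:~R * (2 * pi).

Lemma dir_itv e : 0 <= dir e < 2 * pi.
Proof.
have pi2_gt0 : 0 < 2 * pi :> R by rewrite mulr_gt0 ?pi_gt0.
have /andP [lo hi] := floor_itv (phi e / (2 * pi)).
rewrite ler_pdivlMr // in lo; rewrite ltr_pdivrMr // intrD in hi.
by rewrite /dir; apply/andP; split; lra.
Qed.

Lemma dir_inj : injective dir.
Proof.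
move=> e x dir_ex; have [//|/phi_inj []] := eqVneq e x.
by exists (fl e - fl x); move: dir_ex; rewrite /dir intrB; lra.
Qed.

Definition gap e x := if dir e < dir x then dir x - dir e else dir x - dir e + 2 * pi.

Lemma gap_ccw e x : x != e -> ccw_gap phi e x (gap e x).
Proof.
move=> xe; have dir_ne : dir e != dir x by apply: contra xe => /eqP /dir_inj ->.
have := dir_itv e; have := dir_itv x; have pi_gt0 := @pi_gt0 R.
rewrite /ccw_gap /gap; case: (ltrP (dir e) (dir x)) => lt_ex /andP [x0 x1] /andP [e0 e1].
  by split; [apply/andP; split; lra | exists (fl x - fl e); rewrite /dir intrB; ring].
have {}lt_ex : dir x < dir e by rewrite lt_neqAle eq_sym dir_ne.
split; first by apply/andP; split; lra.
by exists (fl x - fl e - 1); rewrite /dir !intrB; ring.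
Qed.

Lemma ccw_gap_uniq e x t t' : ccw_gap phi e x t -> ccw_gap phi e x t' -> t = t'.
Proof.
move=> [/andP [t0 t1] [k Ek]] [/andP [t'0 t'1] [l El]]; apply: congr2pi_eq.
  by exists (l - k); move: Ek El; rewrite intrB; lra.
by apply/andP; split; lra.
Qed.

Variable next : I -> I.
Hypothesis next_ccw : forall e, is_ccw_next phi e (next e).

Lemma gap_next_lt e x : x != e -> x != next e -> gap e (next e) < gap e x.
Proof.
move=> xe xn; have [ne [t [t_gap t_min]]] := next_ccw e.
rewrite -(ccw_gap_uniq _ _ _ _ t_gap (gap_ccw _ _ ne)) lt_neqAle.
rewrite (t_min x _ xe (gap_ccw _ _ xe)) andbT.
apply/negP => /eqP tE; apply: (phi_inj _ _ xn).
case: (gap_ccw _ _ xe) => _ [k Ek]; case: t_gap => _ [l El].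
by exists (k - l); rewrite Ek El tE intrB; ring.
Qed.

Lemma orient_dir_next e x :
  x != e -> x != next e -> orient dir e x = orient dir e (next e) * orient dir (next e) x.
Proof.
move=> xe xn; have := gap_next_lt _ _ xe xn; have [ne _] := next_ccw e.
have neq u v : u != v -> dir u < dir v \/ dir v < dir u.
  by move=> uv; apply/orP; rewrite -neq_lt; apply: contra uv => /eqP /dir_inj ->.
have /andP [? ?] := dir_itv e; have /andP [? ?] := dir_itv x.
have /andP [? ?] := dir_itv (next e).
have := neq _ _ xe; have := neq _ _ ne; have := neq _ _ xn.
rewrite /orient /gap; do 3!case: ltrP; rewrite ?mulr1 ?mulrNN // => *; lra.
Qed.

End Directions.

Arguments dir_inj {R I phi}.
Arguments gap_ccw {R I phi} phi_inj [e x].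
Arguments orient_dir_next {R I phi} phi_inj {next}.

Section Vertex.
Context {R : realType} {I D : finType}.
Variables (z : I -> D) (phi w a theta : I -> R)
  (alpha : I -> I -> R) (F : D -> R[i]).
Hypothesis phi_inj : forall e e' : I, e != e' -> ~ congr2pi (phi e) (phi e').
Hypothesis a_congr : forall e, congr2pi (a e) (phi e + w e).
Hypothesis alpha_rot : forall e x, x != e -> is_rot_angle phi w e x (alpha e x).
Hypothesis theta_itv : forall e, 0 < theta e <= pi / 2.

(* cis (half_angle e) = +-exp(-i a_e / 2), a sign that Pr does not see. *)
Definition half_angle e := - (dir phi e + w e) / 2.

Lemma Pr_half_angle u e d :
  Pr (F (z e)) (u * cis (- ((a e + d) / 2))) = Pr (F (z e)) (u * cis (half_angle e - d / 2)).
Proof.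
have [k ->] := a_congr e.
rewrite -(Pr_cisD_intpi _ _ _ (k + Num.floor (phi e / (2 * pi)))).
by congr (Pr _ (_ * cis _)); rewrite /half_angle /dir intrD; lra.
Qed.

Definition coord_plus e := cis_coord (F (z e)) (half_angle e - theta e / 2 + pi / 2).
Definition coord_minus e := cis_coord (F (z e)) (half_angle e + theta e / 2 + pi / 2).

Lemma Pr_plus e : Pr (F (z e)) ('i * cis (- ((a e + theta e) / 2))) =
  (coord_plus e)%:C * cis (half_angle e - theta e / 2 + pi / 2).
Proof. by rewrite Pr_half_angle -cisDpihalf Pr_cis. Qed.

Lemma Pr_minus e : Pr (F (z e)) ('i * cis (- ((a e - theta e) / 2))) =
  (coord_minus e)%:C * cis (half_angle e + theta e / 2 + pi / 2).
Proof. by rewrite Pr_half_angle mulNr opprK -cisDpihalf Pr_cis. Qed.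

Lemma alpha_gap e x : x != e -> alpha e x = - w e + (gap phi e x - pi) + w x.
Proof.
move=> xe; have [tau [/andP [tau_lo tau_hi] [[k Ek] ->]]] := alpha_rot _ _ xe.
have [/andP [gap_lo gap_hi] [l El]] := gap_ccw phi_inj xe.
congr (_ + _ + _); apply: congr2pi_eq.
  by exists (k + l); rewrite Ek El intrD; ring.
by apply/andP; split; lra.
Qed.

Lemma cis_half_alpha e x : x != e ->
  cis (alpha e x / 2) * cis (half_angle x) =
  (orient (dir phi) e x)%:C * cis (half_angle e - pi / 2).
Proof.
move=> xe; rewrite -cisD alpha_gap // /orient /gap /half_angle; case: ifP => _.
  by rewrite mul1r; congr cis; lra.
rewrite rmorphN1 mulN1r -cisDpi; congr cis; lra.
Qed.

Lemma Sf_eq x : Sf z a theta F x =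
  (sin (theta x / 2) * cis_coord (F (z x)) (half_angle x))%:C * cis (half_angle x).
Proof.
rewrite /Sf -[cis _]mul1r -[a x]addr0 Pr_half_angle mul0r subr0 mul1r Pr_cis.
by rewrite rmorphM mulrA.
Qed.

Lemma Sf_bar_eq e : Sf_bar z a theta F e =
  (sin (theta e / 2) * cis_coord (F (z e)) (half_angle e - pi / 2))%:C *
  cis (half_angle e - pi / 2).
Proof. by rewrite /Sf_bar -[cis _]mul1r Pr_half_angle mul1r Pr_cis rmorphM mulrA. Qed.

Lemma coord_plus_sub_minus x : coord_plus x - coord_minus x =
  2 * (sin (theta x / 2) * cis_coord (F (z x)) (half_angle x)).
Proof.
rewrite /coord_plus /coord_minus /cis_coord !cosDpihalf !sinDpihalf.
by rewrite !sinD !cosD sinN cosN; ring.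
Qed.

Lemma coord_plus_add_minus e : coord_plus e + coord_minus e =
  - 2 * (cos (theta e / 2) * cis_coord (F (z e)) (half_angle e - pi / 2)).
Proof.
rewrite /coord_plus /coord_minus /cis_coord !cosDpihalf !sinDpihalf.
by rewrite !sinD !cosD !sinN !cosN cos_pihalf sin_pihalf; ring.
Qed.

Lemma KW_bar_eq e : KW_bar z a theta alpha F e =
  (- (tan (theta e / 2) / 2) * cyclic_sum (dir phi) coord_plus coord_minus e)%:C *
  cis (half_angle e - pi / 2).
Proof.
have cos_gt0 : 0 < cos (theta e / 2).
  by have := theta_itv e; have := pi_gt0 R => *; apply: cos_gt0_pihalf; lra.
rewrite /KW_bar Sf_bar_eq (eq_bigl (fun x => x != e)) //.
under eq_bigr => x xe do
  rewrite Sf_eq mulrCA cis_half_alpha // mulrA -rmorphM [_ * orient _ _ _]mulrC.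
rewrite -big_distrl -rmorph_sum mulrA -rmorphM -mulrBl -rmorphB; congr (_%:C * _).
rewrite /cyclic_sum coord_plus_add_minus.
under [X in _ = _ * (_ + X)]eq_bigr => x _ do rewrite coord_plus_sub_minus mulrCA.
by rewrite -mulr_sumr /tan; field; rewrite gt_eqF.
Qed.

Lemma KW_bar_eq0 e : KW_bar z a theta alpha F e = 0 <->
  cyclic_sum (dir phi) coord_plus coord_minus e = 0.
Proof.
have [theta_gt0 theta_le] := andP (theta_itv e); have pi_gt0 := pi_gt0 R.
have tan_gt0 : 0 < tan (theta e / 2).
  by rewrite divr_gt0 ?sin_gt0_pi ?cos_gt0_pihalf //; apply/andP; split; lra.
have coef_neq0 : - (tan (theta e / 2) / 2) != 0 by apply: ltr0_neq0; lra.
rewrite KW_bar_eq; split=> [/eqP | ->]; last by rewrite mulr0 mul0r.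
by rewrite realC_mul_cis_eq0 mulf_eq0 (negbTE coef_neq0) => /eqP.
Qed.

Lemma ccw_relation_iff e x : x != e ->
  Pr (F (z e)) ('i * cis (- ((a e + theta e) / 2))) =
    Pr (F (z x)) ('i * cis (- ((a x - theta x) / 2))) *
    cis ((pi + alpha e x - theta e - theta x) / 2) <->
  coord_plus e = orient (dir phi) e x * coord_minus x.
Proof.
move=> xe; rewrite Pr_plus Pr_minus -mulrA.
have -> : cis (half_angle x + theta x / 2 + pi / 2) *
    cis ((pi + alpha e x - theta e - theta x) / 2) =
    cis (alpha e x / 2) * cis (half_angle x) * cis (pi - theta e / 2).
  by rewrite -!cisD; congr cis; lra.
rewrite cis_half_alpha // -mulrA -cisD mulrA -rmorphM.
have -> : half_angle e - pi / 2 + (pi - theta e / 2) = half_angle e - theta e / 2 + pi / 2.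
  by lra.
rewrite (mulrC (coord_minus x)); split=> [/eqP | ->] //.
by rewrite -subr_eq0 -mulrBl -rmorphB realC_mul_cis_eq0 subr_eq0 => /eqP.
Qed.

End Vertex.

Arguments KW_bar_eq0 {R I D z phi w a theta alpha F}.
Arguments ccw_relation_iff {R I D} z {phi w a} theta {alpha} F phi_inj a_congr alpha_rot [e x].

Theorem proposition4p1 (R : realType) (I D : finType) (z : I -> D)
  (phi w a theta : I -> R) (alpha : I -> I -> R) (Rn : I -> I)
  (F : D -> R[i])
  (Hdeg : (2 <= #|I|)%N)
  (Hphi : forall e e' : I, e != e' -> ~ congr2pi (phi e) (phi e'))
  (Hw : forall e : I, congr2pi (a e) (phi e + w e))
  (Htheta : forall e : I, 0 < theta e <= pi / 2)
  (Halpha : forall e e' : I, e' != e -> is_rot_angle phi w e e' (alpha e e'))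
  (HR : forall e : I, is_ccw_next phi e (Rn e)) :
  (forall e : I, KW_bar z a theta alpha F e = 0) <->
  (forall e : I,
     let e' := Rn e in
     let beta := pi + alpha e e' in
     Pr (F (z e)) ('i * cis (- ((a e + theta e) / 2))) =
     Pr (F (z e')) ('i * cis (- ((a e' - theta e') / 2))) *
       cis ((beta - theta e - theta e') / 2)).
Proof.
have next_neq e : Rn e != e by case: (HR e).
have := cyclic_sum_eq0 (dir_inj Hphi) next_neq (orient_dir_next Hphi HR)
  (coord_plus z phi w theta F) (coord_minus z phi w theta F).
have KW0 := KW_bar_eq0 Hphi Hw Halpha Htheta.
have rel e := ccw_relation_iff z theta F Hphi Hw Halpha (next_neq e).
move=> [cyclic_sum0 relation]; split=> H e /=.
  by apply/rel; apply: cyclic_sum0 => e0; apply/KW0.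
by apply/KW0; apply: relation => e0; apply/rel.
Qed.
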